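(* Let $\Omega\subseteq\mathbb{R}^n$ be open. The sets $\mathbb{G}_{bd}(\Omega)$, $\mathbb{G}_{ft}(\Omega)$, $\mathbb{G}_{nf}(\Omega)$ and $\mathbb{G}(\Omega)$ are all Dedekind order complete with respect to the inclusion order $\subseteq$, where $f\subseteq g$ means $f(x)\subseteq g(x)$ for all $x\in\Omega$.
   Context: $\overline{\mathbb{R}}=\mathbb{R}\cup\{\pm\infty\}$, $\mathbb{I}\overline{\mathbb{R}}$ is the set of closed intervals $[\underline a,\overline a]$ with $\underline a\le\overline a$ in $\overline{\mathbb{R}}$, $a\in\overline{\mathbb{R}}$ identified with $[a,a]$. $\mathbb{A}(X)$ is the set of functions $X\to\mathbb{I}\overline{\mathbb{R}}$. $B_\delta(x)=\{y\in\Omega:\|x-y\|<\delta\}$. For dense $D\subseteq\Omega$ and $f\in\mathbb{A}(D)$: $I(D,\Omega,f)(x)=\sup_{\delta>0}\inf\{z\in f(y):y\in B_\delta(x)\cap D\}$, $S(D,\Omega,f)(x)=\inf_{\delta>0}\sup\{z\in f(y):y\in B_\delta(x)\cap D\}$, $F(D,\Omega,f)(x)=[I(D,\Omega,f)(x),S(D,\Omega,f)(x)]$. $f\in\mathbb{A}(\Omega)$ is D-continuous if $F(D,\Omega,f)=f$ for every dense $D\subseteq\Omega$; $\mathbb{G}(\Omega)$ is the set of D-continuous functions, and $\mathbb{G}_{bd}(\Omega)$, $\mathbb{G}_{ft}(\Omega)$, $\mathbb{G}_{nf}(\Omega)$ are its subsets of bounded, finite and nearly finite functions: $f$ is bounded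 if there is $M\in\mathbb{R}$ with $f(x)\subseteq[-M,M]$ for all $x$; finite if both endpoints of $f(x)$ are real for all $x$; nearly finite if there is an open dense $D\subseteq\Omega$ on which $f$ is finite. A poset is Dedekind order complete if every nonempty subset bounded above has a supremum in it and every nonempty subset bounded below has an infimum in it. *)

From HB Require Import structures.
From mathcomp Require Import all_boot all_order all_algebra.
From mathcomp Require Import all_classical all_reals.
From mathcomp Require Import ereal Rstruct.
From Stdlib Require Import Rdefinitions.
Set Implicit Arguments. Unset Strict Implicit. Unset Printing Implicit Defensive.
Import Order.TTheory GRing.Theory Num.Theory.
Local Open Scope classical_set_scope.
Local Open Scope ring_scope.

Notation R := Rdefinitions.R.

Definition pt (n : nat) := 'I_n -> R.

Definition edist n (x y : pt n) : R :=
  Num.sqrt (\sum_(i < n) (x i - y i) ^+ 2).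

Definition ball_in n (Omega : set (pt n)) (x : pt n) (delta : R) : set (pt n) :=
  [set y | Omega y /\ edist x y < delta].

Definition is_open n (U : set (pt n)) : Prop :=
  forall x, U x -> exists2 delta : R, 0 < delta & forall y, edist x y < delta -> U y.

Definition dense_in n (D Omega : set (pt n)) : Prop :=
  D `<=` Omega /\
  forall x, Omega x -> forall delta : R, 0 < delta -> exists2 y, D y & edist x y < delta.

Record ival := Ival { lo : \bar R; hi : \bar R; lo_le_hi : (lo <= hi)%E }.

Definition in_ival (z : \bar R) (a : ival) : Prop := (lo a <= z)%E /\ (z <= hi a)%E.

Definition dom n (Omega : set (pt n)) := {x : pt n | Omega x}.
Definition Afun n (Omega : set (pt n)) := dom Omega -> ival.

(* I(D,Omega,f)(x) and S(D,Omega,f)(x), for f defined on Omega (only its values on D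
   are used). *)
Definition Iop n (Omega D : set (pt n)) (f : Afun Omega) (x : pt n) : \bar R :=
  ereal_sup [set ereal_inf [set z | exists y : dom Omega,
                 D (sval y) /\ ball_in Omega x delta (sval y) /\ in_ival z (f y)]
            | delta in [set delta : R | 0 < delta]].

Definition Sop n (Omega D : set (pt n)) (f : Afun Omega) (x : pt n) : \bar R :=
  ereal_inf [set ereal_sup [set z | exists y : dom Omega,
                 D (sval y) /\ ball_in Omega x delta (sval y) /\ in_ival z (f y)]
            | delta in [set delta : R | 0 < delta]].

(* f is D-continuous: F(D,Omega,f) = f for every dense D subset of Omega. *)
Definition Dcont n (Omega : set (pt n)) (f : Afun Omega) : Prop :=
  forall D, dense_in D Omega ->
    forall x : dom Omega, Iop D f (sval x) = lo (f x) /\ Sop D f (sval x) = hi (f x).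

Definition G n (Omega : set (pt n)) : set (Afun Omega) := [set f | Dcont f].
Arguments G {n} Omega _.

Definition bounded_fun n (Omega : set (pt n)) (f : Afun Omega) : Prop :=
  exists M : R, forall x, ((- M)%:E <= lo (f x))%E /\ (hi (f x) <= M%:E)%E.

Definition finite_fun n (Omega : set (pt n)) (f : Afun Omega) : Prop :=
  forall x, lo (f x) \is a fin_num /\ hi (f x) \is a fin_num.

Definition nearly_finite_fun n (Omega : set (pt n)) (f : Afun Omega) : Prop :=
  exists D : set (pt n), is_open D /\ dense_in D Omega /\
    forall x : dom Omega, D (sval x) -> lo (f x) \is a fin_num /\ hi (f x) \is a fin_num.

Definition G_bd n (Omega : set (pt n)) := [set f | G Omega f /\ bounded_fun f].
Arguments G_bd {n} Omega _.
Definition G_ft n (Omega : set (pt n)) := [set f | G Omega f /\ finite_fun f].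
Arguments G_ft {n} Omega _.
Definition G_nf n (Omega : set (pt n)) := [set f | G Omega f /\ nearly_finite_fun f].
Arguments G_nf {n} Omega _.

Definition ival_incl n (Omega : set (pt n)) (f g : Afun Omega) : Prop :=
  forall x, (lo (g x) <= lo (f x))%E /\ (hi (f x) <= hi (g x))%E.

Definition upper_bound T (P S : set T) (le : T -> T -> Prop) (u : T) :=
  P u /\ forall f, S f -> le f u.
Definition lower_bound T (P S : set T) (le : T -> T -> Prop) (l : T) :=
  P l /\ forall f, S f -> le l f.

Definition dedekind_complete T (P : set T) (le : T -> T -> Prop) : Prop :=
  (forall S, S `<=` P -> S !=set0 -> (exists u, upper_bound P S le u) ->
     exists s, upper_bound P S le s /\ forall u, upper_bound P S le u -> le s u) /\
  (forall S, S `<=` P -> S !=set0 -> (exists l, lower_bound P S le l) ->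
     exists i, lower_bound P S le i /\ forall l, lower_bound P S le l -> le l i).
Arguments ival_incl {n} Omega f g.

(* Split an interval function f into its two components lo f and -hi f.  Then
   f is D-continuous iff both components are lower D-continuous, i.e. lower
   semicontinuous with every strict sublevel set {h < c} contained in the
   closure of its interior; and f is included in g iff both components of g lie
   pointwise below those of f.  Lower D-continuous functions form a complete
   lattice for the pointwise order: the greatest lower bound of a family is
   I(inf h), the lower semicontinuous envelope of its pointwise infimum, and the
   least upper bound is I(S(sup h)).  An inclusion-supremum of interval
   functions is thus built from greatest lower bounds of the components and an
   inclusion-infimum from least upper bounds; a nonempty family, resp. a common
   lower bound, guarantees lo <= hi for the result.  Being bounded, finite or
   nearly finite is inherited by subintervals, so the three subclasses inherit
   Dedekind completeness from G. *)
From mathcomp Require Import all_boot all_order all_algebra.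
From mathcomp Require Import all_classical all_reals.
From mathcomp Require Import ereal Rstruct.
From mathcomp Require Import ring lra.
Set Implicit Arguments. Unset Strict Implicit. Unset Printing Implicit Defensive.
Import Order.TTheory GRing.Theory Num.Theory.
Local Open Scope classical_set_scope.
Local Open Scope ring_scope.

Section EuclideanDistance.
Variable n : nat.
Implicit Types (x y z : pt n) (a b : 'I_n -> R).

Lemma edist_xx x : edist x x = 0.
Proof. by rewrite /edist big1 ?sqrtr0 // => i _; rewrite subrr expr0n. Qed.

Lemma sumr_sqr_ge0 a : 0 <= \sum_i a i ^+ 2.
Proof. by apply: sumr_ge0 => i _; exact: sqr_ge0. Qed.

Lemma cauchy_schwarz a b :
  (\sum_i a i * b i) ^+ 2 <= (\sum_i a i ^+ 2) * (\sum_i b i ^+ 2).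
Proof.
set A := \sum_i a i ^+ 2; set B := \sum_i b i ^+ 2; set C := \sum_i a i * b i.
have [B0 | B_neq0] := eqVneq B 0.
  have b0 i : b i = 0.
    apply/eqP; rewrite -sqrf_eq0; apply/eqP.
    exact: (psumr_eq0P (P := xpredT) (fun i _ => sqr_ge0 (b i)) B0).
  have -> : C = 0 by rewrite /C big1 // => i _; rewrite b0 mulr0.
  by rewrite B0 expr0n mulr0.
have B_gt0 : 0 < B by rewrite lt_def B_neq0 sumr_sqr_ge0.
(* expand 0 <= \sum_i (B a_i - C b_i)^2 = B (A B - C^2) *)
have := sumr_sqr_ge0 (fun i => B * a i - C * b i).
have -> : \sum_i (B * a i - C * b i) ^+ 2 =
    \sum_i (B ^+ 2 * a i ^+ 2 - (2 * B * C) * (a i * b i) + C ^+ 2 * b i ^+ 2).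
  by apply: eq_bigr => i _; ring.
rewrite big_split /= sumrB -!mulr_sumr -/A -/B -/C.
nra.
Qed.

Lemma edist_triangle x y z : edist x z <= edist x y + edist y z.
Proof.
rewrite /edist; set a := fun i => x i - y i; set b := fun i => y i - z i.
have -> : \sum_i (x i - z i) ^+ 2 =
    \sum_i a i ^+ 2 + 2 * \sum_i a i * b i + \sum_i b i ^+ 2.
  by rewrite mulr_sumr -!big_split /=; apply: eq_bigr => i _; rewrite /a /b; ring.
have := cauchy_schwarz a b; have := sumr_sqr_ge0 a; have := sumr_sqr_ge0 b.
set A := \sum_i a i ^+ 2; set B := \sum_i b i ^+ 2; set C := \sum_i a i * b i.
move=> B0 A0 CS.
have C_le : C <= Num.sqrt A * Num.sqrt B.
  rewrite -sqrtrM //; apply: le_trans (ler_norm C) _; rewrite -sqrtr_sqr.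
  exact: ler_wsqrtr.
have sA := sqrtr_ge0 A; have sB := sqrtr_ge0 B.
rewrite -[A in A + _ + _]sqr_sqrtr // -[B in _ + B]sqr_sqrtr //.
rewrite -[X in _ <= X]ger0_norm ?addr_ge0 // -sqrtr_sqr; apply: ler_wsqrtr; nra.
Qed.

End EuclideanDistance.

Local Open Scope ereal_scope.

Lemma ereal_lt_dense (a b : \bar R) : a < b -> exists c, a < c /\ c < b.
Proof.
case: a => [a| |]; case: b => [b| |] //= ab.
- by have [h1 h2] := midf_lt ab; exists ((a + b) / 2)%R%:E; rewrite !lte_fin.
- by exists (a + 1)%R%:E; rewrite lte_fin ltey ltrDl ltr01.
- by exists (b - 1)%R%:E; rewrite lte_fin ltNye gtrBl ltr01.
- by exists 0.
Qed.

Section LowerDContinuity.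
Variables (n : nat) (Omega : set (pt n)).
Local Notation dm := (dom Omega).
Local Notation fn := (dm -> \bar R).
Implicit Types (D : set (pt n)) (h g : fn).

Definition ball_dom D (x : pt n) (delta : R) : set dm :=
  [set y : dm | D (sval y) /\ ball_in Omega x delta (sval y)].

Definition lower_env D h (x : pt n) : \bar R :=
  ereal_sup [set ereal_inf (h @` ball_dom D x delta)
            | delta in [set delta : R | (0 < delta)%R]].

Definition upper_env h (x : pt n) : \bar R :=
  ereal_inf [set ereal_sup (h @` ball_dom Omega x delta)
            | delta in [set delta : R | (0 < delta)%R]].

Definition lower_Dcont h :=
  forall D, dense_in D Omega -> forall x : dm, lower_env D h (sval x) = h x.

Definition lsc h := forall x : dm, lower_env Omega h (sval x) = h x.

Definition sublevels_regular h := forall (x : dm) c, h x < c ->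
  forall d : R, (0 < d)%R -> exists (y : dm) (e : R), (0 < e)%R /\
    forall w : dm, (edist (sval y) (sval w) < e)%R ->
      (edist (sval x) (sval w) < d)%R /\ h w < c.

Definition fle h g := forall y, h y <= g y.

Lemma ball_domE D x delta (y : dm) :
  ball_dom D x delta y <-> D (sval y) /\ (edist x (sval y) < delta)%R.
Proof.
rewrite /ball_dom /ball_in /=; split; first by case=> ? [].
by case=> ? ?; split => //; split => //; exact: proj2_sig y.
Qed.

Lemma ball_dom_center D (x : dm) delta : D (sval x) -> (0 < delta)%R ->
  ball_dom D (sval x) delta x.
Proof. by move=> Dx d0; apply/ball_domE; rewrite edist_xx. Qed.

Lemma ball_dom_shrink (p : pt n) (z w : dm) d : (edist p (sval z) < d)%R ->
  (edist (sval z) (sval w) < d - edist p (sval z))%R -> (edist p (sval w) < d)%R.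
Proof. by move=> pz zw; have := edist_triangle p (sval z) (sval w); lra. Qed.

Lemma ereal_inf_image_lt (A : set dm) h c :
  ereal_inf (h @` A) < c -> exists2 y, A y & h y < c.
Proof. by move/ereal_inf_lt => [_ [y Ay <-] hc]; exists y. Qed.

Lemma lower_env_le D h (x : dm) : D (sval x) -> lower_env D h (sval x) <= h x.
Proof.
move=> Dx; apply: ge_ereal_sup => _ [d /= d0 <-].
by apply: ereal_inf_lbound; exists x => //; exact: ball_dom_center.
Qed.

Lemma inf_ball_le_lower_env D h p d : (0 < d)%R ->
  ereal_inf (h @` ball_dom D p d) <= lower_env D h p.
Proof. by move=> d0; apply: ereal_sup_ubound; exists d. Qed.

Lemma lower_env_gt D h p c : c < lower_env D h p ->
  exists2 d : R, (0 < d)%R & c < ereal_inf (h @` ball_dom D p d).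
Proof. by move/ereal_sup_gt => [_ [d /= d0 <-] cl]; exists d. Qed.

Lemma le_lower_env_subset D h p : D `<=` Omega -> lower_env Omega h p <= lower_env D h p.
Proof.
move=> DO; apply: ge_ereal_sup => _ [d /= d0 <-].
apply: le_trans (inf_ball_le_lower_env _ _ _ d0); apply: ereal_inf_le_tmp.
by apply: image_subset => y /ball_domE [Dy By]; apply/ball_domE; split => //; exact: DO.
Qed.

Lemma le_lower_env D h g p : fle h g -> lower_env D h p <= lower_env D g p.
Proof.
move=> hg; apply: ge_ereal_sup => _ [d /= d0 <-].
apply: le_trans (inf_ball_le_lower_env _ _ _ d0).
apply: le_ereal_inf_tmp => _ [y By <-]; apply: le_trans (hg y).
by apply: ereal_inf_lbound; exists y.
Qed.

Lemma upper_env_ge h (x : dm) : h x <= upper_env h (sval x).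
Proof.
apply: le_ereal_inf_tmp => _ [d /= d0 <-]; apply: ereal_sup_ubound.
by exists x => //; apply: ball_dom_center; first exact: proj2_sig x.
Qed.

Lemma upper_env_le_sup_ball h p d : (0 < d)%R ->
  upper_env h p <= ereal_sup (h @` ball_dom Omega p d).
Proof. by move=> d0; apply: ereal_inf_lbound; exists d. Qed.

Lemma upper_env_lt h p c : upper_env h p < c ->
  exists2 d : R, (0 < d)%R & ereal_sup (h @` ball_dom Omega p d) < c.
Proof. by move/ereal_inf_lt => [_ [d /= d0 <-] cl]; exists d. Qed.

Lemma le_upper_env h g p : fle h g -> upper_env h p <= upper_env g p.
Proof.
move=> hg; apply: le_ereal_inf_tmp => _ [d /= d0 <-].
apply: le_trans (upper_env_le_sup_ball h p d0) _.
apply: ge_ereal_sup => _ [y By <-]; apply: le_trans (hg y) _.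
by apply: ereal_sup_ubound; exists y.
Qed.

Lemma lower_Dcont_lsc h : lower_Dcont h -> lsc h.
Proof.
by move=> hD x; apply: hD; split=> // p Op d d0; exists p => //; rewrite edist_xx.
Qed.

(* If no ball inside B_d(x) lies in {h < c}, the points of Omega outside
   B_d(x) \cap {h < c} form a dense set D, and then I(D,h)(x) >= c > h x. *)
Lemma lower_Dcont_sublevels_regular h : lower_Dcont h -> sublevels_regular h.
Proof.
move=> hD x c hxc d d0; apply: contrapT => no_ball.
pose D p := Omega p /\
  forall w : dm, sval w = p -> ~ ((edist (sval x) p < d)%R /\ h w < c).
have dD : dense_in D Omega.
  split=> [p [] //|z Oz e e0]; apply: contrapT => no_pt; apply: no_ball.
  exists (exist _ z Oz), e; split=> // -[p Op] /= zp; apply: contrapT => Np.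
  apply: no_pt; exists p => //; split=> // -[q Oq] /= qp; subst q.
  by rewrite (Prop_irrelevance Oq Op).
suff : c <= lower_env D h (sval x) by rewrite hD // leNgt hxc.
apply: le_trans (inf_ball_le_lower_env _ _ _ d0).
apply: le_ereal_inf_tmp => _ [w /ball_domE [[_ Nw] xw] <-].
by rewrite leNgt; apply/negP => hwc; exact: (Nw w).
Qed.

Lemma lsc_regular_lower_Dcont h : lsc h -> sublevels_regular h -> lower_Dcont h.
Proof.
move=> hl hr D [DO dD] x; apply/le_anti/andP; split; last first.
  by rewrite -[X in X <= _](hl x); exact: le_lower_env_subset.
rewrite leNgt; apply/negP => /lower_env_gt [d d0 lt].
have [y [e [e0 hy]]] := hr x _ lt d d0.
have [p Dp yp] := dD (sval y) (proj2_sig y) e e0.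
pose w : dm := exist _ p (DO p Dp).
have [xw hw] := hy w yp.
have : ereal_inf (h @` ball_dom D (sval x) d) <= h w.
  by apply: ereal_inf_lbound; exists w => //; apply/ball_domE.
by rewrite leNgt hw.
Qed.

Lemma lsc_lower_env g : lsc (fun y => lower_env Omega g (sval y)).
Proof.
move=> x; apply/le_anti/andP; split; first by apply: lower_env_le; exact: proj2_sig x.
apply: ge_ereal_sup => _ [d /= d0 <-].
have d20 : (0 < d / 2)%R by rewrite divr_gt0.
apply: le_trans (inf_ball_le_lower_env _ _ _ d20).
apply: le_ereal_inf_tmp => _ [y /ball_domE [_ xy] <-].
apply: le_trans (inf_ball_le_lower_env _ _ _ d20); apply: ereal_inf_le_tmp.
apply: image_subset => w /ball_domE [Ow yw]; apply/ball_domE; split=> //.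
by have := edist_triangle (sval x) (sval y) (sval w); lra.
Qed.

Lemma lower_Dcont_glb (H : set fn) : H `<=` lower_Dcont ->
  exists m, lower_bound lower_Dcont H fle m /\
    forall l, lower_bound lower_Dcont H fle l -> fle l m.
Proof.
move=> HD; pose phi : fn := fun y => ereal_inf [set h y | h in H].
pose m : fn := fun y => lower_env Omega phi (sval y).
have m_phi : fle m phi by move=> y; apply: lower_env_le; exact: proj2_sig y.
have phi_h h : H h -> fle phi h by move=> Hh y; apply: ereal_inf_lbound; exists h.
exists m; split; first split.
- apply: lsc_regular_lower_Dcont; first exact: lsc_lower_env.
  move=> x c mxc d d0.
  have : ereal_inf (phi @` ball_dom Omega (sval x) d) < c.
    by apply: le_lt_trans mxc; exact: inf_ball_le_lower_env.
  move/ereal_inf_image_lt => [z /ball_domE [_ xz] phizc].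
  have [_ [h Hh <-] hzc] := ereal_inf_lt phizc.
  have dz : (0 < d - edist (sval x) (sval z))%R by rewrite subr_gt0.
  have [y [e [e0 hy]]] := lower_Dcont_sublevels_regular (HD h Hh) hzc dz.
  exists y, e; split=> // w yw; have [zw hwc] := hy w yw; split.
    exact: ball_dom_shrink zw.
  by apply: le_lt_trans hwc; apply: le_trans (m_phi w) _; exact: phi_h.
- by move=> h Hh y; apply: le_trans (m_phi y) _; exact: phi_h.
- move=> l [lD lH] y; rewrite -(lower_Dcont_lsc lD y); apply: le_lower_env => w.
  by apply: le_ereal_inf_tmp => _ [h Hh <-]; exact: lH.
Qed.

Lemma lower_env_upper_env_le h : lower_Dcont h ->
  fle (fun y => lower_env Omega (fun w => upper_env h (sval w)) (sval y)) h.
Proof.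
move=> hD y; rewrite leNgt; apply/negP => /lower_env_gt [d d0 lt].
have [c [hyc ce]] := ereal_lt_dense lt.
have [y0 [e [e0 hy0]]] := lower_Dcont_sublevels_regular hD hyc d0.
have yy0 : (edist (sval y) (sval y0) < d)%R by case: (hy0 y0); rewrite ?edist_xx.
have inf_le : ereal_inf ((fun w => upper_env h (sval w)) @` ball_dom Omega (sval y) d)
    <= upper_env h (sval y0).
  by apply: ereal_inf_lbound; exists y0 => //; apply/ball_domE; split; first exact: proj2_sig y0.
have sup_le : ereal_sup (h @` ball_dom Omega (sval y0) e) <= c.
  by apply: ge_ereal_sup => _ [w /ball_domE [_ hw] <-]; apply/ltW; case: (hy0 w hw).
have := le_trans inf_le (le_trans (upper_env_le_sup_ball h (sval y0) e0) sup_le).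
by rewrite leNgt ce.
Qed.

Lemma lower_Dcont_lub (H : set fn) : H `<=` lower_Dcont ->
  exists m, upper_bound lower_Dcont H fle m /\
    forall u, upper_bound lower_Dcont H fle u -> fle m u.
Proof.
move=> HD; pose phi : fn := fun y => ereal_sup [set h y | h in H].
pose s : fn := fun y => upper_env phi (sval y).
pose m : fn := fun y => lower_env Omega s (sval y).
have h_phi h : H h -> fle h phi by move=> Hh y; apply: ereal_sup_ubound; exists h.
exists m; split; first split.
- apply: lsc_regular_lower_Dcont; first exact: lsc_lower_env.
  move=> x c mxc d d0.
  have : ereal_inf (s @` ball_dom Omega (sval x) d) < c.
    by apply: le_lt_trans mxc; exact: inf_ball_le_lower_env.
  move/ereal_inf_image_lt => [z /ball_domE [_ xz] szc].
  have [e e0 sup_lt] := upper_env_lt szc.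
  have dz : (0 < d - edist (sval x) (sval z))%R by rewrite subr_gt0.
  exists z, (Num.min e (d - edist (sval x) (sval z)))%R; split.
    by rewrite lt_min e0 dz.
  move=> w; rewrite lt_min => /andP [zw1 zw2]; split; first exact: ball_dom_shrink zw2.
  apply: le_lt_trans (lower_env_le _ (proj2_sig w)) _; apply: le_lt_trans sup_lt.
  have ez : (0 < e - edist (sval z) (sval w))%R by rewrite subr_gt0.
  apply: le_trans (upper_env_le_sup_ball _ _ ez) _.
  apply: ereal_sup_le; apply: image_subset => v /ball_domE [Ov wv].
  by apply/ball_domE; split=> //; exact: ball_dom_shrink wv.
- move=> h Hh y; rewrite -(lower_Dcont_lsc (HD h Hh) y); apply: le_lower_env => w.
  exact: le_trans (h_phi h Hh w) (upper_env_ge phi w).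
- move=> u [uD uH] y; apply: le_trans _ (lower_env_upper_env_le uD y).
  apply: le_lower_env => w; apply: le_upper_env => v.
  by apply: ge_ereal_sup => _ [h Hh <-]; exact: uH.
Qed.

End LowerDContinuity.
Arguments lower_Dcont {n Omega}.

Section IntervalFunctions.
Variables (n : nat) (Omega : set (pt n)).
Local Notation dm := (dom Omega).
Local Notation fn := (dm -> \bar R).
Local Notation lo_of f := (fun y : dm => lo (f y)).
Local Notation hiN_of f := (fun y : dm => - hi (f y)).

Lemma Iop_lower_env D (f : Afun Omega) x : Iop D f x = lower_env D (lo_of f) x.
Proof.
rewrite /Iop /lower_env; congr ereal_sup; apply: eq_imagel => d _.
apply/le_anti/andP; split.
  apply: ereal_inf_le_tmp => _ [y [Dy By] <-]; exists y.
  by split=> //; split=> //; split; [exact: lexx | exact: lo_le_hi].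
apply: le_ereal_inf_tmp => z [y [Dy [By [hz _]]]]; apply: le_trans hz.
by apply: ereal_inf_lbound; exists y.
Qed.

Lemma Sop_lower_env D (f : Afun Omega) x : Sop D f x = - lower_env D (hiN_of f) x.
Proof.
rewrite /Sop /lower_env.
have inf_hiN d : ereal_inf [set - hi (f y) | y in ball_dom D x d] =
    - ereal_sup [set z | exists y : dm,
        D (sval y) /\ ball_in Omega x d (sval y) /\ in_ival z (f y)].
  rewrite -(image_comp (fun y => hi (f y)) -%E) ereal_infN; congr (- _).
  apply/le_anti/andP; split.
    apply: ereal_sup_le => _ [y [Dy By] <-]; exists y.
    by split=> //; split=> //; split; [exact: lo_le_hi | exact: lexx].
  apply: ge_ereal_sup => z [y [Dy [By [_ hz]]]]; apply: le_trans hz _.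
  by apply: ereal_sup_ubound; exists y.
rewrite -[LHS]oppeK -ereal_supN image_comp; congr (- ereal_sup _).
by apply: eq_imagel => d _ /=; rewrite inf_hiN.
Qed.

Lemma DcontP (f : Afun Omega) :
  Dcont f <-> lower_Dcont (lo_of f) /\ lower_Dcont (hiN_of f).
Proof.
split=> [fD | [loD hiD] D dD x].
  split=> D dD x; have [I_lo S_hi] := fD D dD x; first by rewrite -Iop_lower_env.
  by rewrite -S_hi Sop_lower_env oppeK.
by rewrite Iop_lower_env Sop_lower_env loD // hiD // oppeK.
Qed.

Definition ival_of (L U : fn) (LU : forall x, L x <= - U x) : Afun Omega :=
  fun x => Ival (LU x).

Lemma G_ival_of (L U : fn) (LU : forall x, L x <= - U x) :
  lower_Dcont L -> lower_Dcont U -> G Omega (ival_of LU).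
Proof.
move=> LD UD; apply/DcontP; split=> //=.
by have -> : (fun y => - - U y) = U by apply: funext => y; rewrite oppeK.
Qed.

Lemma lo_image_lower_Dcont (S : set (Afun Omega)) : S `<=` G Omega ->
  [set lo_of f | f in S] `<=` lower_Dcont.
Proof. by move=> SG _ [f Sf <-]; have [] := (DcontP f).1 (SG f Sf). Qed.

Lemma hiN_image_lower_Dcont (S : set (Afun Omega)) : S `<=` G Omega ->
  [set hiN_of f | f in S] `<=` lower_Dcont.
Proof. by move=> SG _ [f Sf <-]; have [] := (DcontP f).1 (SG f Sf). Qed.

Lemma G_sup (S : set (Afun Omega)) : S `<=` G Omega -> S !=set0 ->
  exists s, upper_bound (G Omega) S (ival_incl Omega) s /\
    forall u, upper_bound (G Omega) S (ival_incl Omega) u -> ival_incl Omega s u.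
Proof.
move=> SG [f0 Sf0].
have [L [[LD L_lb] L_glb]] := lower_Dcont_glb (lo_image_lower_Dcont SG).
have [U [[UD U_lb] U_glb]] := lower_Dcont_glb (hiN_image_lower_Dcont SG).
have LU x : L x <= - U x.
  have := U_lb _ (imageP (fun f => hiN_of f) Sf0) x; rewrite leeNr => /(le_trans _); apply.
  exact: le_trans (L_lb _ (imageP (fun f => lo_of f) Sf0) x) (lo_le_hi _).
exists (ival_of LU); split; first split; first exact: G_ival_of.
  move=> f Sf x; split=> /=; first exact: (L_lb _ (imageP (fun f => lo_of f) Sf)).
  by rewrite leeNr; exact: (U_lb _ (imageP (fun f => hiN_of f) Sf)).
move=> u [Gu uS] x; have [uloD uhiD] := (DcontP u).1 Gu; split=> /=.
  by apply: (L_glb _ (conj uloD _)) => _ [f Sf <-] y; case: (uS f Sf y).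
rewrite leeNl; apply: (U_glb _ (conj uhiD _)) => _ [f Sf <-] y /=.
by rewrite leeN2; case: (uS f Sf y).
Qed.

Lemma G_inf (S : set (Afun Omega)) l : S `<=` G Omega ->
  lower_bound (G Omega) S (ival_incl Omega) l ->
  exists i, lower_bound (G Omega) S (ival_incl Omega) i /\
    forall l', lower_bound (G Omega) S (ival_incl Omega) l' -> ival_incl Omega l' i.
Proof.
move=> SG [Gl lS].
have [L [[LD L_ub] L_lub]] := lower_Dcont_lub (lo_image_lower_Dcont SG).
have [U [[UD U_ub] U_lub]] := lower_Dcont_lub (hiN_image_lower_Dcont SG).
have [lloD lhiD] := (DcontP l).1 Gl.
have L_le_lo : fle L (lo_of l).
  by apply: (L_lub _ (conj lloD _)) => _ [f Sf <-] y; case: (lS f Sf y).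
have U_le_hiN : fle U (hiN_of l).
  by apply: (U_lub _ (conj lhiD _)) => _ [f Sf <-] y /=; rewrite leeN2; case: (lS f Sf y).
have LU x : L x <= - U x.
  have := U_le_hiN x; rewrite leeNr; apply: le_trans.
  exact: le_trans (L_le_lo x) (lo_le_hi _).
exists (ival_of LU); split; first split; first exact: G_ival_of.
  move=> f Sf x; split=> /=; first exact: (L_ub _ (imageP (fun f => lo_of f) Sf)).
  by rewrite leeNl; exact: (U_ub _ (imageP (fun f => hiN_of f) Sf)).
move=> u [Gu uS] x; have [uloD uhiD] := (DcontP u).1 Gu; split=> /=.
  by apply: (L_lub _ (conj uloD _)) => _ [f Sf <-] y; case: (uS f Sf y).
rewrite leeNr; apply: (U_lub _ (conj uhiD _)) => _ [f Sf <-] y /=.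
by rewrite leeN2; case: (uS f Sf y).
Qed.

Lemma dedekind_complete_G : dedekind_complete (G Omega) (ival_incl Omega).
Proof.
split=> [S SG S0 _ | S SG _ [l Sl]]; first exact: G_sup.
exact: G_inf Sl.
Qed.

Lemma ival_incl_fin_num (a b : ival) : lo b <= lo a -> hi a <= hi b ->
  lo b \is a fin_num -> hi b \is a fin_num ->
  lo a \is a fin_num /\ hi a \is a fin_num.
Proof.
move=> ba ab /fin_numPlt/andP [lob _] /fin_numPlt/andP [_ hib].
have la := lo_le_hi a.
split; apply/fin_numPlt/andP; split.
- exact: lt_le_trans lob ba.
- exact: le_lt_trans (le_trans la ab) hib.
- exact: lt_le_trans lob (le_trans ba la).
- exact: le_lt_trans ab hib.
Qed.

Lemma bounded_fun_incl (a b : Afun Omega) :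
  ival_incl Omega a b -> bounded_fun b -> bounded_fun a.
Proof.
move=> ab [M bM]; exists M => x; have [h1 h2] := ab x; have [m1 m2] := bM x.
by split; [exact: le_trans h1 | exact: le_trans m2].
Qed.

Lemma finite_fun_incl (a b : Afun Omega) :
  ival_incl Omega a b -> finite_fun b -> finite_fun a.
Proof.
by move=> ab bF x; have [h1 h2] := ab x; have [f1 f2] := bF x; exact: ival_incl_fin_num h1 h2 f1 f2.
Qed.

Lemma nearly_finite_fun_incl (a b : Afun Omega) :
  ival_incl Omega a b -> nearly_finite_fun b -> nearly_finite_fun a.
Proof.
move=> ab [D [oD [dD bF]]]; exists D; split=> //; split=> // x Dx.
by have [h1 h2] := ab x; have [f1 f2] := bF x Dx; exact: ival_incl_fin_num h1 h2 f1 f2.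
Qed.

End IntervalFunctions.

Lemma dedekind_complete_setI T (P Q : set T) (le : T -> T -> Prop) :
  dedekind_complete P le -> (forall a b, le a b -> Q b -> Q a) ->
  dedekind_complete (P `&` Q) le.
Proof.
move=> [Psup Pinf] Qdown; split.
- move=> S SPQ S0 [u [[Pu Qu] uS]].
  have [|s [[Ps sS] s_lub]] := Psup S (fun f Sf => (SPQ f Sf).1) S0; first by exists u.
  exists s; split; first split=> //.
    by split=> //; apply: Qdown Qu; exact: s_lub.
  by move=> v [[Pv _] vS]; exact: s_lub.
- move=> S SPQ [f0 Sf0] [l [[Pl _] lS]].
  have [||i [[Pi iS] i_glb]] := Pinf S (fun f Sf => (SPQ f Sf).1); first by exists f0.
    by exists l.
  exists i; split; first split=> //.
    by split=> //; apply: Qdown (iS f0 Sf0) _; exact: (SPQ f0 Sf0).2.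
  by move=> v [[Pv _] vS]; exact: i_glb.
Qed.

Theorem theorem16 (n : nat) (Omega : set (pt n)) (HO : is_open Omega) :
  dedekind_complete (G_bd Omega) (ival_incl Omega) /\
  dedekind_complete (G_ft Omega) (ival_incl Omega) /\
  dedekind_complete (G_nf Omega) (ival_incl Omega) /\
  dedekind_complete (G Omega) (ival_incl Omega).
Proof.
have GD := dedekind_complete_G Omega.
split; [|split; [|split]] => //.
- exact: (dedekind_complete_setI GD (@bounded_fun_incl n Omega)).
- exact: (dedekind_complete_setI GD (@finite_fun_incl n Omega)).
- exact: (dedekind_complete_setI GD (@nearly_finite_fun_incl n Omega)).
Qed.
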